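(* Let $S_1$ and $S_2$ be semigroups with finite generating sets $A_1$ and $A_2$ respectively. If $(S_1,d_{A_1})$ quasi-isometrically embeds into $(S_2,d_{A_2})$ and $(S_2,d_{A_2})$ quasi-isometrically embeds into $(S_1,d_{A_1})$, then $S_1$ and $S_2$ have the same growth type. In particular, growth type is a quasi-isometry invariant of finitely generated semigroups.
   Context: For a semigroup $S$ generated by a finite set $A$, $d_A(x,y)=\inf\{|w|:w\in A^*,\ xw=y\}$ ($A^*$ the free monoid on $A$, $\inf\emptyset=\infty$), a not necessarily symmetric distance with values in $\mathbb{R}^{\ge0}\cup\{\infty\}$. A map $f:X\to X'$ of such spaces is a quasi-isometric embedding if there are $1\le\lambda<\infty$, $0<\epsilon<\infty$ with $\frac1\lambda d(x,y)-\epsilon\le d'(f(x),f(y))\le\lambda d(x,y)+\epsilon$ for all $x,y$; it is a quasi-isometry if in addition there is $0\le\mu<\infty$ such that every $x'\in X'$ has some $x$ with $\max(d'(x',f(x)),d'(f(x),x'))\le\mu$. Semigroups $S,T$ are quasi-isometric if $(S,d_A)$, $(T,d_B)$ are quasi-isometric for some finite generating sets $A,B$. A growth function is a monotone non-decreasing function $\mathbb{N}\to\mathbb{N}$; write $\alpha_1\preccurlyeq\alpha_2$ if there are natural numbers $k_1,k_2\ge1$ with $\alpha_1(t)\le k_1\alpha_2(k_2t)$ for all $t$, and $\alpha_1\sim\alpha_2$ if $\alpha_1\preccurlyeq\alpha_2$ and $\alpha_2\preccurlyeq\alpha_1$; the growth type of $\alpha$ is its $\sim$-class. The growth function of $S$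 with respect to $A$ is $g_S(m)=|\{z\in S: l_A(z)\le m\}|$, where $l_A(z)$ is the minimal length of a nonempty word over $A$ representing $z$; its growth type (the growth type of $S$) does not depend on the finite generating set. *)

From Stdlib Require Import Reals List Arith ClassicalEpsilon.
From Coquelicot Require Import Coquelicot.
Open Scope R_scope.

Definition associative {S : Type} (mul : S -> S -> S) : Prop :=
  forall x y z, mul x (mul y z) = mul (mul x y) z.

Definition word_over {S : Type} (A : list S) (w : list S) : Prop :=
  List.Forall (fun a => In a A) w.

Definition act {S : Type} (mul : S -> S -> S) (x : S) (w : list S) : S :=
  fold_left mul w x.

Definition eval_ne {S : Type} (mul : S -> S -> S) (a : S) (w : list S) : S :=
  act mul a w.

Definition generates {S : Type} (mul : S -> S -> S) (A : list S) : Prop :=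
  forall z : S, exists a w, word_over A (a :: w) /\ eval_ne mul a w = z.

(* d_A(x,y) = inf { |w| : w in A^*, x w = y }, inf of empty set = +oo *)
Definition sdist {S : Type} (mul : S -> S -> S) (A : list S) (x y : S) : Rbar :=
  Glb_Rbar (fun r : R => exists w, word_over A w /\ act mul x w = y
                                   /\ r = INR (length w)).

(* quasi-isometric embedding between spaces with (asymmetric, extended) distances *)
Definition qi_embedding {X Y : Type} (d : X -> X -> Rbar) (d' : Y -> Y -> Rbar)
  (f : X -> Y) : Prop :=
  exists lam eps : R, 1 <= lam /\ 0 < eps /\
    forall x y : X,
      Rbar_le (Rbar_minus (Rbar_mult (/ lam) (d x y)) eps) (d' (f x) (f y)) /\
      Rbar_le (d' (f x) (f y)) (Rbar_plus (Rbar_mult lam (d x y)) eps).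

Definition quasi_isometry {X Y : Type} (d : X -> X -> Rbar) (d' : Y -> Y -> Rbar)
  (f : X -> Y) : Prop :=
  qi_embedding d d' f /\
  exists mu : R, 0 <= mu /\
    forall x' : Y, exists x : X,
      Rbar_le (d' x' (f x)) mu /\ Rbar_le (d' (f x) x') mu.

Definition qi_semigroups {S1 S2 : Type} (m1 : S1 -> S1 -> S1) (m2 : S2 -> S2 -> S2)
  : Prop :=
  exists (B1 : list S1) (B2 : list S2) (f : S1 -> S2),
    generates m1 B1 /\ generates m2 B2 /\ quasi_isometry (sdist m1 B1) (sdist m2 B2) f.

Definition short {S : Type} (mul : S -> S -> S) (A : list S) (m : nat) (z : S) : Prop :=
  exists a w, word_over A (a :: w) /\ (length (a :: w) <= m)%nat /\ eval_ne mul a w = z.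

Definition growth {S : Type} (mul : S -> S -> S) (A : list S) (m : nat) : nat :=
  epsilon (inhabits 0%nat) (fun n => exists l : list S,
     NoDup l /\ (forall z, In z l <-> short mul A m z) /\ length l = n).

Definition growth_le (a1 a2 : nat -> nat) : Prop :=
  exists k1 k2 : nat, (1 <= k1)%nat /\ (1 <= k2)%nat /\
    forall t, (a1 t <= k1 * a2 (k2 * t))%nat.

Definition growth_equiv (a1 a2 : nat -> nat) : Prop :=
  growth_le a1 a2 /\ growth_le a2 a1.

From Stdlib Require Import Reals List Arith ClassicalEpsilon.
From Coquelicot Require Import Coquelicot.
From Stdlib Require Import Lra Lia Psatz Classical ZArith.
Open Scope R_scope.

(* The upper bound of a quasi-isometric embedding f : S1 -> S2 says that f maps
   a ball of radius n around a generator a into f(a) times a ball of radius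
   about C n in S2; the lower bound says that each fibre of f has diameter at
   most some D. Hence every element of length at most n + 1 in S1 is reached
   by a word of length at most D from a chosen preimage of one of at most
   |A1| (1 + g2(C n)) points, which bounds g1 by a multiple of g2 rescaled.
   Changing the generating set is the special case f = id, and a
   quasi-isometry has a coarse inverse that is again a coarse embedding. *)

Fixpoint words_upto {T : Type} (A : list T) (n : nat) : list (list T) :=
  match n with
  | O => nil :: nil
  | S n' => nil :: flat_map (fun a => map (cons a) (words_upto A n')) A
  end.

Lemma In_words_upto {T : Type} (A : list T) n w :
  In w (words_upto A n) <-> word_over A w /\ (length w <= n)%nat.
Proof.
  revert w; induction n as [|n IHn]; intros w; simpl.
  - split.
    + intros [<- | []]. split; [constructor | simpl; lia].
    + intros [_ Hw]. destruct w; simpl in Hw; [now left | lia].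
  - split.
    + intros [<- | Hw]; [split; [constructor | simpl; lia] |].
      apply in_flat_map in Hw as [a [Ha Hw]].
      apply in_map_iff in Hw as [w' [<- Hw']].
      apply IHn in Hw' as [Hover Hlen].
      split; [constructor; auto | simpl; lia].
    + intros [Hover Hlen]. destruct w as [|a w']; [now left | right].
      inversion Hover; subst. apply in_flat_map. exists a. split; auto.
      apply in_map, IHn. split; auto. simpl in Hlen; lia.
Qed.

Lemma act_mul_l {T : Type} (mul : T -> T -> T) :
  associative mul -> forall u x b, act mul (mul x b) u = mul x (act mul b u).
Proof.
  intros Hassoc u; induction u as [|a u IHu]; intros x b; simpl; auto.
  unfold act in *; simpl. rewrite <- Hassoc. apply IHu.
Qed.

Lemma act_cons {T : Type} (mul : T -> T -> T) :
  associative mul -> forall x b u, act mul x (b :: u) = mul x (act mul b u).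
Proof. intros Hassoc x b u. apply act_mul_l, Hassoc. Qed.

Section Reach.
Context {T : Type} (mul : T -> T -> T) (A : list T).

Definition reach (x y : T) (n : nat) : Prop :=
  exists w, word_over A w /\ act mul x w = y /\ (length w <= n)%nat.

Lemma reach_refl x : reach x x 0.
Proof. exists nil. repeat split; [constructor | simpl; lia]. Qed.

Lemma reach_cat x y z n m : reach x y n -> reach y z m -> reach x z (n + m).
Proof.
  intros [w1 [Hw1 [E1 L1]]] [w2 [Hw2 [E2 L2]]].
  exists (w1 ++ w2). split; [apply Forall_app; auto |]. split.
  - unfold act in *. rewrite fold_left_app, E1; auto.
  - rewrite length_app; lia.
Qed.

Lemma reach_weaken x y n m : reach x y n -> (n <= m)%nat -> reach x y m.
Proof. intros [w [Hw [E L]]] Hnm. exists w; repeat split; auto; lia. Qed.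

Lemma short_weaken n m z : short mul A n z -> (n <= m)%nat -> short mul A m z.
Proof. intros [a [w [Hw [L E]]]] Hnm. exists a, w; repeat split; auto; lia. Qed.

Lemma reach_factor x y n :
  associative mul -> reach x y n ->
  y = x \/ exists v, short mul A n v /\ y = mul x v.
Proof.
  intros Hassoc [[|b u] [Hw [E L]]]; [now left |]. right.
  exists (eval_ne mul b u). split.
  - exists b, u. auto.
  - rewrite <- E. apply act_cons, Hassoc.
Qed.

Lemma sdist_le_length x y w :
  word_over A w -> act mul x w = y -> Rbar_le (sdist mul A x y) (INR (length w)).
Proof.
  intros Hw E. apply (Glb_Rbar_correct _). exists w; auto.
Qed.

Lemma sdist_spec x y :
  (sdist mul A x y = p_infty /\ ~ exists w, word_over A w /\ act mul x w = y)
  \/ exists w, word_over A w /\ act mul x w = y /\ sdist mul A x y = INR (length w).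
Proof.
  destruct (classic (exists w, word_over A w /\ act mul x w = y)) as [[w0 [H0 E0]] | Hnone].
  - right.
    set (P := fun n => exists w, word_over A w /\ act mul x w = y /\ length w = n).
    destruct (dec_inh_nat_subset_has_unique_least_element P (fun n => classic (P n)))
      as [m [[[w [Hw [Ew Lw]]] Hmin] _]]; [exists (length w0), w0; auto |].
    exists w. repeat split; auto. apply is_glb_Rbar_unique. split.
    + intros r [w' [Hw' [E' ->]]]. simpl. apply le_INR. subst m. apply Hmin.
      exists w'; auto.
    + intros b Hb. apply Hb. exists w; auto.
  - left. split; auto. apply is_glb_Rbar_unique. split.
    + intros r [w' [Hw' [E' ->]]]. exfalso; apply Hnone; eauto.
    + intros b _. destruct b; simpl; auto.
Qed.

Lemma reach_of_sdist_le x y (r : R) (N : nat) :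
  Rbar_le (sdist mul A x y) r -> r <= INR N -> reach x y N.
Proof.
  intros Hle HrN.
  destruct (sdist_spec x y) as [[E _] | [w [Hw [Ew E]]]]; rewrite E in Hle; simpl in Hle;
    [contradiction |].
  exists w. repeat split; auto. apply INR_le. lra.
Qed.

Lemma sdist_of_reach x y n :
  reach x y n -> exists d, sdist mul A x y = Finite d /\ d <= INR n.
Proof.
  intros [w0 [H0 [E0 L0]]].
  pose proof (sdist_le_length x y w0 H0 E0) as Hle.
  destruct (sdist_spec x y) as [[_ Hnone] | [w [Hw [Ew E]]]]; [exfalso; eauto |].
  rewrite E in *. eexists; split; [reflexivity |]. simpl in Hle.
  apply le_INR in L0. lra.
Qed.

End Reach.

Section Growth.
Context {T : Type} (mul : T -> T -> T) (A : list T).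

Definition classic_eq_dec (x y : T) : {x = y} + {x <> y} :=
  excluded_middle_informative (x = y).

Definition short_list (m : nat) : list T :=
  nodup classic_eq_dec
    (flat_map (fun w => match w with nil => nil | a :: w' => eval_ne mul a w' :: nil end)
              (words_upto A m)).

Lemma In_short_list m z : In z (short_list m) <-> short mul A m z.
Proof.
  unfold short_list. rewrite nodup_In, in_flat_map. split.
  - intros [[|a w] [Hw Hz]]; [destruct Hz |].
    apply In_words_upto in Hw. destruct Hz as [<- | []]. exists a, w. tauto.
  - intros [a [w [Hw [Hl <-]]]]. exists (a :: w). split; [apply In_words_upto; auto |].
    now left.
Qed.

Lemma growth_eq_length m : growth mul A m = length (short_list m).
Proof.
  unfold growth.
  set (P := fun n => exists l : list T,
     NoDup l /\ (forall z, In z l <-> short mul A m z) /\ length l = n).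
  assert (HP : P (length (short_list m))).
  { exists (short_list m). split; [apply NoDup_nodup |]. split; [apply In_short_list | auto]. }
  destruct (epsilon_spec (inhabits 0%nat) P (ex_intro _ _ HP)) as [l [Hnd [Hl <-]]].
  apply Nat.le_antisymm; apply NoDup_incl_length; try apply NoDup_nodup; auto;
    intros z Hz; [apply In_short_list, Hl, Hz | apply Hl, In_short_list, Hz].
Qed.

Lemma growth_le_length m (L : list T) :
  (forall z, short mul A m z -> In z L) -> (growth mul A m <= length L)%nat.
Proof.
  intros Hcov. rewrite growth_eq_length. apply NoDup_incl_length; [apply NoDup_nodup |].
  intros z Hz. apply Hcov, In_short_list, Hz.
Qed.

Lemma growth_pos m z : short mul A m z -> (1 <= growth mul A m)%nat.
Proof.
  intros Hz. rewrite growth_eq_length. apply In_short_list in Hz.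
  destruct (short_list m); [destruct Hz | simpl; lia].
Qed.

Lemma growth0 : growth mul A 0 = 0%nat.
Proof.
  apply Nat.le_0_r. apply (growth_le_length 0 nil).
  intros z [a [w [_ [Hl _]]]]. simpl in Hl; lia.
Qed.

End Growth.

Lemma growth_le_trans a1 a2 a3 :
  growth_le a1 a2 -> growth_le a2 a3 -> growth_le a1 a3.
Proof.
  intros [k1 [k2 [? [? H12]]]] [k1' [k2' [? [? H23]]]].
  exists (k1 * k1')%nat, (k2' * k2)%nat. split; [nia |]. split; [nia |].
  intros t. specialize (H12 t). specialize (H23 (k2 * t)%nat).
  replace (k2' * k2 * t)%nat with (k2' * (k2 * t))%nat by ring. nia.
Qed.

Section CoarseEmbedding.
Context {T1 T2 : Type} (m1 : T1 -> T1 -> T1) (m2 : T2 -> T2 -> T2)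
  (A1 : list T1) (A2 : list T2) (f : T1 -> T2) (C D : nat).
Hypothesis m2_assoc : associative m2.
Hypothesis A2_generates : generates m2 A2.
Hypothesis f_reach : forall x y n, reach m1 A1 x y n -> reach m2 A2 (f x) (f y) (C * n + C).
Hypothesis f_fibre : forall x y, f x = f y -> reach m1 A1 x y D.

(* The default [z0] only serves to make the type inhabited for [epsilon]. *)
Definition preimage (z0 : T1) (y : T2) : T1 := epsilon (inhabits z0) (fun z => f z = y).

Definition growth_cover (n : nat) : list T1 :=
  flat_map (fun a => map (fun p => act m1 (preimage a (fst p)) (snd p))
     (list_prod (f a :: map (m2 (f a)) (short_list m2 A2 (S C * S n)))
                (words_upto A1 D))) A1.

Lemma In_growth_cover n z : short m1 A1 (S n) z -> In z (growth_cover n).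
Proof.
  intros [a [w [Hw [Hlen <-]]]]. inversion Hw as [|? ? Ha Hw']; subst.
  assert (Hreach : reach m2 A2 (f a) (f (eval_ne m1 a w)) (C * n + C)).
  { apply f_reach. exists w. simpl in Hlen. repeat split; auto; lia. }
  set (targets := f a :: map (m2 (f a)) (short_list m2 A2 (S C * S n))).
  assert (Htarget : In (f (eval_ne m1 a w)) targets).
  { destruct (reach_factor m2 A2 _ _ _ m2_assoc Hreach) as [-> | [v [Hv ->]]];
      [now left | right].
    apply in_map, In_short_list. apply (short_weaken _ _ _ _ _ Hv). nia. }
  set (p := preimage a (f (eval_ne m1 a w))).
  assert (Hp : f p = f (eval_ne m1 a w)).
  { apply (epsilon_spec (inhabits a) (fun z => f z = _)). eauto. }
  destruct (f_fibre _ _ Hp) as [w' [Hw'' [Hact Hlw']]].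
  apply in_flat_map. exists a. split; auto.
  apply in_map_iff. exists (f (eval_ne m1 a w), w'). split; [exact Hact |].
  apply in_prod; [exact Htarget | apply In_words_upto; auto].
Qed.

Lemma length_growth_cover n :
  length (growth_cover n) =
  (length A1 * (S (growth m2 A2 (S C * S n)) * length (words_upto A1 D)))%nat.
Proof.
  unfold growth_cover. rewrite growth_eq_length.
  apply flat_map_constant_length. intros a _.
  rewrite length_map, length_prod. simpl. rewrite length_map. reflexivity.
Qed.

Lemma growth_le_of_coarse_embedding : growth_le (growth m1 A1) (growth m2 A2).
Proof.
  set (W := length (words_upto A1 D)).
  exists (S (2 * length A1 * W)), (S C). split; [lia |]. split; [lia |].
  intros [|n]; [rewrite growth0; lia |].
  pose proof (growth_le_length m1 A1 _ _ (In_growth_cover n)) as Hcover.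
  rewrite length_growth_cover in Hcover. fold W in Hcover.
  set (g := growth m2 A2 (S C * S n)) in *.
  destruct A1 as [|a0 A1']; [simpl in Hcover; lia |].
  (* [S g <= 2 * g] since the nonempty ball around [f a0] is counted by [g]. *)
  assert (Hg : (1 <= g)%nat).
  { destruct (A2_generates (f a0)) as [b [v [Hbv _]]]. inversion Hbv; subst.
    apply (growth_pos m2 A2 _ b). exists b, nil. repeat split; [constructor; auto | simpl; nia]. }
  nia.
Qed.

End CoarseEmbedding.

Section Transfer.
Context {T1 T2 : Type} (m1 : T1 -> T1 -> T1) (m2 : T2 -> T2 -> T2)
  (A1 : list T1) (A2 : list T2).

Lemma reach_of_upper_bound x y x' y' (lam eps : R) (n N : nat) :
  0 <= lam -> lam * INR n + eps <= INR N ->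
  Rbar_le (sdist m2 A2 x' y') (Rbar_plus (Rbar_mult lam (sdist m1 A1 x y)) eps) ->
  reach m1 A1 x y n -> reach m2 A2 x' y' N.
Proof.
  intros Hlam HN Hup Hreach.
  destruct (sdist_of_reach m1 A1 x y n Hreach) as [d [Ed Hd]]. rewrite Ed in Hup.
  apply (reach_of_sdist_le m2 A2 x' y' (lam * d + eps)); [exact Hup |].
  assert (lam * d <= lam * INR n) by (apply Rmult_le_compat_l; auto). lra.
Qed.

Lemma reach_of_lower_bound x y x' y' (lam eps : R) (n N : nat) :
  1 <= lam -> lam * (INR n + eps) <= INR N ->
  Rbar_le (Rbar_minus (Rbar_mult (/ lam) (sdist m1 A1 x y)) eps) (sdist m2 A2 x' y') ->
  reach m2 A2 x' y' n -> reach m1 A1 x y N.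
Proof.
  intros Hlam HN Hlow Hreach.
  destruct (sdist_of_reach m2 A2 x' y' n Hreach) as [d [Ed Hd]]. rewrite Ed in Hlow.
  assert (Hinv : 0 < / lam) by (apply Rinv_0_lt_compat; lra).
  destruct (sdist_spec m1 A1 x y) as [[E _] | [w [Hw [Ew E]]]]; rewrite E in Hlow.
  - exfalso. unfold Rbar_mult, Rbar_mult' in Hlow.
    destruct (Rle_dec 0 (/ lam)) as [Hle |]; [| lra].
    destruct (Rle_lt_or_eq_dec 0 (/ lam) Hle); [exact Hlow | lra].
  - simpl in Hlow. exists w. repeat split; auto. apply INR_le.
    set (k := INR (length w)) in *.
    assert (k = lam * (/ lam * k)) by (field; lra). nra.
Qed.

End Transfer.

Lemma exists_nat_ge (r : R) : exists N : nat, r <= INR N.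
Proof.
  destruct (archimed r) as [Hup _].
  destruct (Z_le_gt_dec 0 (up r)) as [Hpos | Hneg].
  - exists (Z.to_nat (up r)). rewrite INR_IZR_INZ, Z2Nat.id; [lra | exact Hpos].
  - exists O. simpl. assert (IZR (up r) < 0) by (apply IZR_lt; lia). lra.
Qed.

Lemma qi_embedding_growth_le {T1 T2 : Type} (m1 : T1 -> T1 -> T1) (m2 : T2 -> T2 -> T2)
  (A1 : list T1) (A2 : list T2) (f : T1 -> T2) :
  associative m2 -> generates m2 A2 ->
  qi_embedding (sdist m1 A1) (sdist m2 A2) f ->
  growth_le (growth m1 A1) (growth m2 A2).
Proof.
  intros Hassoc Hgen [lam [eps [Hlam [Heps Hqi]]]].
  destruct (exists_nat_ge (lam + eps)) as [C HC].
  destruct (exists_nat_ge (lam * eps)) as [D HD].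
  apply (growth_le_of_coarse_embedding m1 m2 A1 A2 f C D); auto.
  - intros x y n. apply (reach_of_upper_bound m1 m2 A1 A2 x y _ _ lam eps); [lra | | apply Hqi].
    rewrite plus_INR, mult_INR. pose proof (pos_INR n). nra.
  - intros x y E. apply (reach_of_lower_bound m1 m2 A1 A2 x y (f x) (f y) lam eps 0);
      [lra | simpl; lra | apply Hqi | rewrite E; apply reach_refl].
Qed.

Lemma quasi_isometry_coarse_inverse {T1 T2 : Type} (m2 : T2 -> T2 -> T2)
  (d1 : T1 -> T1 -> Rbar) (B2 : list T2) (f : T1 -> T2) :
  quasi_isometry d1 (sdist m2 B2) f ->
  exists (g : T2 -> T1) (M : nat),
    forall x', reach m2 B2 x' (f (g x')) M /\ reach m2 B2 (f (g x')) x' M.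
Proof.
  intros [_ [mu [_ Hnear]]]. destruct (exists_nat_ge mu) as [M HM].
  assert (Hex : forall x', exists x, reach m2 B2 x' (f x) M /\ reach m2 B2 (f x) x' M).
  { intros x'. destruct (Hnear x') as [x [H1 H2]].
    exists x. split; eapply reach_of_sdist_le; eauto. }
  exists (fun x' => proj1_sig (constructive_indefinite_description _ (Hex x'))), M.
  intros x'. exact (proj2_sig (constructive_indefinite_description _ (Hex x'))).
Qed.

Lemma quasi_isometry_growth_ge {T1 T2 : Type} (m1 : T1 -> T1 -> T1) (m2 : T2 -> T2 -> T2)
  (B1 : list T1) (B2 : list T2) (f : T1 -> T2) :
  associative m1 -> generates m1 B1 ->
  quasi_isometry (sdist m1 B1) (sdist m2 B2) f ->
  growth_le (growth m2 B2) (growth m1 B1).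
Proof.
  intros Hassoc Hgen Hqi.
  destruct (quasi_isometry_coarse_inverse m2 _ B2 f Hqi) as [g [M Hg]].
  destruct Hqi as [[lam [eps [Hlam [Heps Hbounds]]]] _].
  destruct (exists_nat_ge (lam * (2 * INR M + eps) + lam)) as [C HC].
  apply (growth_le_of_coarse_embedding m2 m1 B2 B1 g C (M + M)); auto.
  - intros x' y' n Hreach.
    apply (reach_of_lower_bound m1 m2 B1 B2 (g x') (g y') (f (g x')) (f (g y'))
             lam eps (M + n + M)); [lra | | apply Hbounds |].
    + rewrite !plus_INR, mult_INR.
      pose proof (pos_INR n). pose proof (pos_INR M).
      assert (0 <= lam * (2 * INR M + eps)) by (apply Rmult_le_pos; lra).
      assert (lam * INR n <= INR C * INR n) by (apply Rmult_le_compat_r; lra). nra.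
    + apply reach_cat with y'; [apply reach_cat with x' |]; apply Hg || auto.
  - intros x' y' E. apply reach_cat with (f (g x')); [apply Hg |]. rewrite E. apply Hg.
Qed.

Lemma generators_reach_bound {T : Type} (m : T -> T -> T) (A B : list T) :
  associative m -> generates m B ->
  exists c, forall a, In a A -> forall x, reach m B x (m x a) c.
Proof.
  intros Hassoc Hgen. induction A as [|a A [c IH]].
  - exists O. intros a [].
  - destruct (Hgen a) as [b [v [Hbv Ea]]].
    exists (Nat.max c (length (b :: v))). intros a' [<- | Ha'] x.
    + exists (b :: v). repeat split; auto; [| lia].
      rewrite (act_cons m Hassoc), <- Ea; reflexivity.
    + apply reach_weaken with c; auto. lia.
Qed.

Lemma reach_change_generators {T : Type} (m : T -> T -> T) (A B : list T) (c : nat) :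
  (forall a, In a A -> forall x, reach m B x (m x a) c) ->
  forall x y n, reach m A x y n -> reach m B x y (c * n).
Proof.
  intros Hc x y n [w [Hw [<- Hlen]]].
  apply reach_weaken with (c * length w)%nat; [| nia]. clear Hlen.
  revert x; induction w as [|a w IHw]; intros x.
  - rewrite Nat.mul_0_r. apply reach_refl.
  - inversion Hw as [| ? ? Ha Hw']; subst. simpl length.
    rewrite Nat.mul_succ_r, Nat.add_comm.
    apply reach_cat with (m x a); [auto | exact (IHw Hw' (m x a))].
Qed.

Lemma growth_le_change_generators {T : Type} (m : T -> T -> T) (A B : list T) :
  associative m -> generates m B -> growth_le (growth m A) (growth m B).
Proof.
  intros Hassoc Hgen. destruct (generators_reach_bound m A B Hassoc Hgen) as [c Hc].
  apply (growth_le_of_coarse_embedding m m A B (fun x => x) c 0); auto.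
  - intros x y n Hreach. apply reach_weaken with (c * n)%nat; [| lia].
    eapply reach_change_generators; eauto.
  - intros x y <-. apply reach_refl.
Qed.

Theorem theorem6p5 :
  (forall (S1 S2 : Type) (m1 : S1 -> S1 -> S1) (m2 : S2 -> S2 -> S2)
          (A1 : list S1) (A2 : list S2),
     associative m1 -> associative m2 ->
     generates m1 A1 -> generates m2 A2 ->
     (exists f : S1 -> S2, qi_embedding (sdist m1 A1) (sdist m2 A2) f) ->
     (exists g : S2 -> S1, qi_embedding (sdist m2 A2) (sdist m1 A1) g) ->
     growth_equiv (growth m1 A1) (growth m2 A2))
  /\
  (forall (S1 S2 : Type) (m1 : S1 -> S1 -> S1) (m2 : S2 -> S2 -> S2),
     associative m1 -> associative m2 ->
     qi_semigroups m1 m2 ->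
     forall (A1 : list S1) (A2 : list S2),
       generates m1 A1 -> generates m2 A2 ->
       growth_equiv (growth m1 A1) (growth m2 A2)).
Proof.
  split.
  - intros S1 S2 m1 m2 A1 A2 Hassoc1 Hassoc2 Hgen1 Hgen2 [f Hf] [g Hg].
    split; eapply qi_embedding_growth_le; eauto.
  - intros S1 S2 m1 m2 Hassoc1 Hassoc2 [B1 [B2 [f [HB1 [HB2 Hqi]]]]] A1 A2 Hgen1 Hgen2.
    split.
    + apply growth_le_trans with (growth m1 B1);
        [apply growth_le_change_generators; auto |].
      apply growth_le_trans with (growth m2 B2);
        [apply (qi_embedding_growth_le _ _ _ _ f); auto; apply Hqi |].
      apply growth_le_change_generators; auto.
    + apply growth_le_trans with (growth m2 B2);
        [apply growth_le_change_generators; auto |].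
      apply growth_le_trans with (growth m1 B1);
        [apply (quasi_isometry_growth_ge _ _ _ _ f); auto |].
      apply growth_le_change_generators; auto.
Qed.
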